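(* Consider a Utility Maximization problem in the MPOI world with ground set $J$, downward-closed constraints $\mathcal{F}\subseteq 2^J$, semiadditive objective $f(I,x)=\sum_{i\in I}x_i+h(I)$, and Markov systems $(S_i)_{i\in J}$ with non-negative destination values. Let $\mathrm{OPT}$ be the utility of an optimal strategy. Then $$\mathrm{OPT}\le \mathbb{E}_{\sigma}\Big[\max_{I\in\mathcal{F}} f\big(I,Y(\sigma)\big)\Big],$$ where $\sigma=(\sigma_i)_{i\in J}$ is a random trajectory profile in which each $S_i$ is run independently from $s_i$ until it reaches a destination state, and $Y(\sigma)=(Y(\sigma_i))_{i\in J}$ is the vector of prevailing costs.
   Context: A Markov system $S=(V,P,s,T,\pi,r)$ consists of a Markov chain on a finite state space $V$ with transition matrix $P=(p_{u,v})$, a starting state $s$, a set $T\subseteq V$ of absorbing destination states, prices $\pi^u\ge0$ for $u\in V\setminus T$, and values $r^t\in\mathbb{R}$ for $t\in T$; every state reaches some destination state. MPOI game / Utility Maximization: each $S_i$ starts at $s_i$; at each step the player either advances some $S_i$ from its current non-destination state $u$, paying $\pi_i^u$ (the state then moves randomly according to $P_i$), or ends the game by selecting a set $I\in\mathcal{F}$ of ready elements (elements whose Markov system is in a destination state). $\mathcal{F}$ is downward-closed and all values are non-negative. The utility of an adaptive strategy is $\mathbb{E}[f(I,(r_i^{\mathrm{dest}(\sigma_i)})_{i\in I})-\text{total price paid}]$, where $\mathrm{dest}(\sigma_i)$ is the destination state reached by $S_i$. Grade: for a Markov system $S$ and $\tau\in\mathbb{R}$, the $\tau$-penalized game from state $v$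 is: at each move the player may Halt (game ends) or Play; Play at a non-destination state $v$ pays $\pi^v$ and moves according to $P$; Play at a destination state $v$ gives the player $r^v-\tau$ and ends the game. Let $U^v(\tau)$ be the optimal expected (value minus price) starting from $v$. The grade of $v$ is $\tau^v=\sup\{\tau\in\mathbb{R}: U^v(\tau)>0\}$; $\tau_i^v$ denotes the grade of $v$ in $S_i$. Prevailing cost: for a trajectory $\sigma_i$ of $S_i$, $Y(\sigma_i)=\min_{v\in\sigma_i}\tau_i^v$. *)

From HB Require Import structures.
From mathcomp Require Import all_boot all_order all_algebra.
From mathcomp Require Import all_classical all_reals all_analysis.
Import Order.TTheory GRing.Theory Num.Theory.
Import numFieldNormedType.Exports.
Local Open Scope ring_scope.

Record MarkovSystem (R : Type) := MkMS {
  ms_state : finType;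
  ms_P : ms_state -> ms_state -> R;
  ms_start : ms_state;
  ms_dest : {set ms_state};
  ms_price : ms_state -> R;                    (* pi^u, used for u \notin T *)
  ms_value : ms_state -> R                     (* r^t, used for t \in T *)
}.

Arguments ms_state {R}. Arguments ms_P {R}. Arguments ms_start {R}.
Arguments ms_dest {R}. Arguments ms_price {R}. Arguments ms_value {R}.

Section Defs.
Variable R : realType.

Definition markov_system (M : MarkovSystem R) : Prop :=
  [/\ (forall u w, 0 <= ms_P M u w),
      (forall u, \sum_(w : ms_state M) ms_P M u w = 1),
      (forall t, t \in ms_dest M -> ms_P M t t = 1),
      (forall u, u \notin ms_dest M -> 0 <= ms_price M u) &
      (forall u, exists2 t, t \in ms_dest M &
          connect [rel a b | 0 < ms_P M a b] u t)].

(* Strategies (decision trees) in the tau-penalized game: Halt or Play, the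
   continuation after Play depending on the new state. *)
Inductive pstrat (V : Type) : Type :=
  | PHalt : pstrat V
  | PPlay : (V -> pstrat V) -> pstrat V.
Arguments PHalt {V}. Arguments PPlay {V}.

Fixpoint pval (M : MarkovSystem R) (tau : R) (sg : pstrat (ms_state M))
    (v : ms_state M) : R :=
  match sg with
  | PHalt => 0
  | PPlay k => if v \in ms_dest M then ms_value M v - tau
               else - ms_price M v +
                    \sum_(w : ms_state M) ms_P M v w * pval M tau (k w) w
  end.

Definition Uopt (M : MarkovSystem R) (tau : R) (v : ms_state M) : R :=
  sup [set pval M tau sg v | sg in [set: pstrat (ms_state M)]]%classic.

Definition grade (M : MarkovSystem R) (v : ms_state M) : R :=
  sup [set tau : R | 0 < Uopt M tau v]%classic.

Fixpoint pathP (M : MarkovSystem R) (v : ms_state M) (p : seq (ms_state M)) : R :=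
  match p with
  | [::] => 1
  | w :: p' => ms_P M v w * pathP M w p'
  end.

Definition prevailing (M : MarkovSystem R) (v : ms_state M) (p : seq (ms_state M)) : R :=
  \big[Num.min/grade M v]_(w <- p) grade M w.

Variable J : finType.

Definition downward_closed (F : {set {set J}}) : Prop :=
  forall I I' : {set J}, I \in F -> I' \subset I -> I' \in F.

Definition semiadd (h : {set J} -> R) (I : {set J}) (y : J -> R) : R :=
  \sum_(i in I) y i + h I.

Definition maxF (F : {set {set J}}) (h : {set J} -> R) (y : J -> R) : R :=
  \big[Num.max/semiadd h (finset.set0 : {set J}) y]_(I in F) semiadd h I y.

(* E over the trajectory profile where each S_i is run independently for n
   steps from s_i (destinations are absorbing, so for n -> oo this is the
   trajectory run until it reaches a destination). *)
Definition exp_prevailing_n (S : J -> MarkovSystem R) (F : {set {set J}})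
    (h : {set J} -> R) (n : nat) : R :=
  \sum_(p : {dffun forall i : J, n.-tuple (ms_state (S i))})
     (\prod_(i : J) pathP (S i) (ms_start (S i)) (p i)) *
     maxF F h (fun i => prevailing (S i) (ms_start (S i)) (p i)).

Definition exp_prevailing (S : J -> MarkovSystem R) (F : {set {set J}})
    (h : {set J} -> R) : R :=
  limn (exp_prevailing_n S F h).

(* Adaptive strategies as decision trees: Stop selecting I, or advance S_i and
   continue depending on the new state of S_i. *)
Inductive strat (V : J -> Type) : Type :=
  | SStop : {set J} -> strat V
  | SAdv : forall i : J, (V i -> strat V) -> strat V.
Arguments SStop {V}. Arguments SAdv {V}.

Definition jstate (S : J -> MarkovSystem R) := forall i : J, ms_state (S i).

Fixpoint svalid (S : J -> MarkovSystem R) (F : {set {set J}})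
    (sg : strat (fun i => ms_state (S i))) (x : jstate S) : Prop :=
  match sg with
  | SStop A => A \in F /\ (forall i, i \in A -> x i \in ms_dest (S i))
  | SAdv i k => x i \notin ms_dest (S i) /\
      (forall w, 0 < ms_P (S i) (x i) w -> svalid S F (k w) (@eqtype.dfwith J (fun j => ms_state (S j)) x i w))
  end.

Fixpoint sutil (S : J -> MarkovSystem R) (h : {set J} -> R)
    (sg : strat (fun i => ms_state (S i))) (x : jstate S) : R :=
  match sg with
  | SStop A => semiadd h A (fun i => ms_value (S i) (x i))
  | SAdv i k => - ms_price (S i) (x i) +
      \sum_(w : ms_state (S i)) ms_P (S i) (x i) w * sutil S h (k w) (@eqtype.dfwith J (fun j => ms_state (S j)) x i w)
  end.

Definition jstart (S : J -> MarkovSystem R) : jstate S := fun i => ms_start (S i).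

End Defs.

Arguments markov_system {R}. Arguments pval {R}. Arguments Uopt {R}.
Arguments grade {R}. Arguments pathP {R}. Arguments prevailing {R}.
Arguments downward_closed {J}. Arguments semiadd {R J}. Arguments maxF {R J}.
Arguments exp_prevailing_n {R J}. Arguments exp_prevailing {R J}.
Arguments jstate {R J}. Arguments svalid {R J}. Arguments sutil {R J}.
Arguments jstart {R J}.

From Pilot Require Import Defs.
From HB Require Import structures.
From mathcomp Require Import all_boot all_order all_algebra.
From mathcomp Require Import all_classical all_reals all_analysis.
From mathcomp Require Import lra.
Import Order.TTheory GRing.Theory Num.Theory.
Import numFieldNormedType.Exports.
Local Open Scope ring_scope.

(* Fix a horizon n and generalize the bound to any joint state x together with
   caps m_i <= grade(x_i): the utility of a strategy from x is at most
   E[max_I f(I, Y^m)] + sum_i U_i^{x_i}(m_i), where Y^m_i is the running minimum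
   of the grades along an n-step trajectory of S_i, started at the cap m_i.  When the strategy stops, the
   selected systems sit in absorbing destinations t_i, where Y^m_i = m_i and
   r^{t_i} - m_i <= U_i(m_i).  When it advances S_i to w, the cap becomes
   min(m_i, grade w); gluing the step to the n-step trajectories from w gives
   (n+1)-step trajectories from x_i, and truncating them back to n steps can
   only raise the running minima; meanwhile U_i pays for the price of the step
   (Bellman inequality of the penalized game), and lowering the cap to grade w
   is free because U^w(grade w) <= 0.  Starting from m_i = grade(s_i) all the
   U-terms vanish, and the bounds decrease in n, so they converge to the
   expectation of the statement. *)

Section DffunSums.
Context {R : comPzSemiRingType} {I : finType}.

Lemma sum_dffun_prod (T_ : I -> finType) (F : forall i, T_ i -> R) :
  \sum_(p : {dffun forall i, T_ i}) \prod_i F i (p i) =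
  \prod_i \sum_(a : T_ i) F i a.
Proof.
pose P_ i := [ffun a : T_ i => F i a].
rewrite (reindex (@dffun_of_fprod I T_)); last exact/onW_bij/dffun_of_fprod_bij.
transitivity (\sum_(t : fprod T_) \prod_(i in I) P_ i (t i)).
  by apply: eq_bigr => t _; apply: eq_bigr => i _; rewrite !ffunE.
rewrite (@big_fprod R 0 1 *%R +%R I T_ P_).
rewrite -(bigA_distr_big_dep (tagged_with T_) (fun i => untag 0 (P_ i))).
apply: eq_bigr => i _.
rewrite (big_tag (fun i a => F i a)); apply: eq_big => // j _.
by rewrite /untag; case: eqP => // e; rewrite ffunE.
Qed.

Lemma sum_dffun_prod_cond (T_ : I -> finType) (Q : forall i, pred (T_ i))
    (F : forall i, T_ i -> R) :
  \sum_(p : {dffun forall i, T_ i} | [forall i, Q i (p i)]) \prod_i F i (p i) =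
  \prod_i \sum_(a | Q i a) F i a.
Proof.
transitivity (\prod_i \sum_a (if Q i a then F i a else 0)); last first.
  by apply: eq_bigr => i _; rewrite [RHS]big_mkcond.
rewrite -sum_dffun_prod big_mkcond; apply: eq_bigr => p _.
case: ifPn => [/forallP Qp | /forallPn[i /negbTE Qi]].
  by apply: eq_bigr => i _; rewrite Qp.
by rewrite (bigD1 i) //= Qi mul0r.
Qed.

Lemma sum_dffun_prod_comp (A B : I -> finType) (phi : forall i, A i -> B i)
    (mu : forall i, A i -> R) (G : {dffun forall i, B i} -> R) :
  \sum_(p : {dffun forall i, A i}) (\prod_i mu i (p i)) * G [ffun i => phi i (p i)] =
  \sum_(p' : {dffun forall i, B i}) (\prod_i \sum_(a | phi i a == p' i) mu i a) * G p'.
Proof.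
rewrite (partition_big (fun p : {dffun forall i, A i} =>
  [ffun i => phi i (p i)] : {dffun forall i, B i}) predT) //=.
apply: eq_bigr => p' _; rewrite -sum_dffun_prod_cond mulr_suml.
apply: eq_big => [p|p /eqP <- //].
apply/eqP/forallP => [<- i | phip]; first by rewrite ffunE.
by apply/ffunP => i; rewrite ffunE; apply/eqP.
Qed.

End DffunSums.

Section DffunWith.
Context {I : finType} {A : I -> finType}.

Definition dffun_with (p : {dffun forall i, A i}) {i} (q : A i) :
    {dffun forall i, A i} :=
  finfun (@eqtype.dfwith I A (fun j => p j) i q).

Lemma dffun_with_in p i (q : A i) : dffun_with p q i = q.
Proof. by rewrite ffunE dfwith_in. Qed.

Lemma dffun_with_out p i (q : A i) j : i != j -> dffun_with p q j = p j.
Proof. by move=> ij; rewrite ffunE dfwith_out. Qed.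

Lemma dffun_with_id p i : dffun_with p (p i) = p.
Proof.
apply/ffunP => j; have [<-|ij] := eqVneq i j; first exact: dffun_with_in.
exact: dffun_with_out.
Qed.

Lemma dffun_with_with p i (q q' : A i) :
  dffun_with (dffun_with p q) q' = dffun_with p q'.
Proof.
apply/ffunP => j; have [<-|ij] := eqVneq i j; first by rewrite !dffun_with_in.
by rewrite !dffun_with_out.
Qed.

Lemma sum_dffun_at {V : nmodType} i (q0 : A i) (X : {dffun forall i, A i} -> V) :
  \sum_p X p =
  \sum_(p : {dffun forall i, A i} | p i == q0) \sum_(q : A i) X (dffun_with p q).
Proof.
rewrite (partition_big (fun p : {dffun forall i, A i} => p i) predT) //=.
rewrite exchange_big /=; apply: eq_bigr => q _.
rewrite (reindex_onto (fun p => dffun_with p q) (fun p => dffun_with p q0)); last first.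
  by move=> p /eqP <-; rewrite dffun_with_with dffun_with_id.
apply: eq_bigl => p; rewrite dffun_with_in eqxx dffun_with_with /=.
by apply/eqP/eqP => [<-|<-]; rewrite ?dffun_with_in ?dffun_with_id.
Qed.

End DffunWith.

Lemma sum_tuple0 {V : nmodType} (T : finType) (F : 0.-tuple T -> V) :
  \sum_(q : 0.-tuple T) F q = F [tuple].
Proof. by rewrite (big_pred1 [tuple]) // => q; rewrite [q]tuple0; apply/esym/eqP. Qed.

Lemma sum_tupleS {V : nmodType} (T : finType) n (F : n.+1.-tuple T -> V) :
  \sum_(q : n.+1.-tuple T) F q =
  \sum_(u : T) \sum_(q : n.-tuple T) F [tuple of u :: q].
Proof.
rewrite pair_big /=.
rewrite (reindex (fun uq : T * n.-tuple T => [tuple of uq.1 :: uq.2])) //=.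
apply: onW_bij; exists (fun q : n.+1.-tuple T => (thead q, [tuple of behead q])).
  by move=> [u q] /=; rewrite theadE; congr pair; apply: val_inj.
by move=> q /=; rewrite [RHS]tuple_eta.
Qed.

Lemma take_tupleS_subproof {T : Type} {n} (q : n.+1.-tuple T) :
  size (take n q) == n.
Proof. by rewrite size_take size_tuple ltnSn. Qed.

Definition trunc_tuple {T : Type} {n} (q : n.+1.-tuple T) : n.-tuple T :=
  Tuple (take_tupleS_subproof q).

Definition prevail {R : realType} (M : MarkovSystem R) (m : R)
    (s : seq (ms_state M)) : R :=
  \big[Num.min/m]_(w <- s) grade M w.

Section MarkovSystemFacts.
Context {R : realType} {M : MarkovSystem R}.
Hypothesis HM : markov_system M.
Local Notation V := (ms_state M).
Local Notation P := (ms_P M).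

Lemma ms_P_ge0 u w : 0 <= P u w. Proof. by case: HM. Qed.

Lemma ms_P_sum1 u : \sum_w P u w = 1. Proof. by case: HM. Qed.

Lemma ms_price_ge0 u : u \notin ms_dest M -> 0 <= ms_price M u.
Proof. by case: HM => _ _ _ + _; apply. Qed.

Lemma ms_P_dest t u : t \in ms_dest M -> u != t -> P t u = 0.
Proof.
move=> Ht; have [_ _ Pabs _ _] := HM.
have sum0 : \sum_(w | w != t) P t w = 0.
  have := ms_P_sum1 t; rewrite (bigD1 t) //= Pabs // => sum1.
  by apply: (addrI 1); rewrite addr0.
exact: (psumr_eq0P (fun w _ => ms_P_ge0 t w) sum0).
Qed.

Lemma ler_sum_P u (f g : V -> R) c : (forall w, 0 < P u w -> f w <= g w + c) ->
  \sum_w P u w * f w <= \sum_w P u w * g w + c.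
Proof.
move=> fg; apply: (@le_trans _ _ (\sum_w P u w * (g w + c))).
  apply: ler_sum => w _; have [<-|Pw] := eqVneq 0 (P u w); first by rewrite !mul0r.
  by rewrite ler_wpM2l ?ms_P_ge0 ?fg // lt_def eq_sym Pw ms_P_ge0.
by under eq_bigr do rewrite mulrDr; rewrite big_split -mulr_suml ms_P_sum1 mul1r.
Qed.

Lemma ler_sum_P_const u (f : V -> R) c : (forall w, f w <= c) ->
  \sum_w P u w * f w <= c.
Proof.
move=> fc; apply: le_trans (ler_sum_P u f (fun=> 0) c _) _.
  by move=> w _; rewrite add0r.
by rewrite big1 ?add0r // => w _; rewrite mulr0.
Qed.

Lemma pathP_ge0 x s : 0 <= Defs.pathP M x s.
Proof. by elim: s x => [|w s IHs] x /=; rewrite ?mulr_ge0 ?ms_P_ge0. Qed.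

Lemma pathP_dest t s :
  t \in ms_dest M -> Defs.pathP M t s != 0 -> {in s, forall u, u = t}.
Proof.
move=> Ht; have [_ _ Pabs _ _] := HM; elim: s => [|u s IHs] //=.
have [->|ut] := eqVneq u t; last by rewrite ms_P_dest // mul0r eqxx.
by rewrite Pabs // mul1r => /IHs st w; rewrite in_cons => /predU1P[|/st].
Qed.

Lemma sum_pathP_cons n x (G : seq V -> R) :
  \sum_(q : n.+1.-tuple V) Defs.pathP M x q * G q =
  \sum_w P x w * \sum_(q : n.-tuple V) Defs.pathP M w q * G (w :: q).
Proof.
rewrite sum_tupleS; apply: eq_bigr => w _; rewrite mulr_sumr.
by apply: eq_bigr => q _; rewrite mulrA.
Qed.

Lemma sum_pathP n x : \sum_(q : n.-tuple V) Defs.pathP M x q = 1.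
Proof.
elim: n x => [|n IHn] x; first by rewrite sum_tuple0.
rewrite -(ms_P_sum1 x) sum_tupleS.
by apply: eq_bigr => w _ /=; rewrite -mulr_sumr IHn mulr1.
Qed.

Lemma sum_pathP_take n x (G : seq V -> R) :
  \sum_(q : n.+1.-tuple V) Defs.pathP M x q * G (take n q) =
  \sum_(q : n.-tuple V) Defs.pathP M x q * G q.
Proof.
elim: n x G => [|n IHn] x G.
  rewrite sum_tuple0 /= mul1r -[RHS]mul1r -(sum_pathP 1 x) mulr_suml.
  by apply: eq_bigr => q _; rewrite take0.
rewrite (sum_pathP_cons _ _ (fun s => G (take n.+1 s))) sum_pathP_cons.
apply: eq_bigr => w _ /=.
by rewrite -(IHn w (fun s => G (w :: s))).
Qed.

Lemma sum_pathP_trunc n x (b : n.-tuple V) :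
  \sum_(a : n.+1.-tuple V | trunc_tuple a == b) Defs.pathP M x a =
  Defs.pathP M x b.
Proof.
rewrite big_mkcond /=.
transitivity (\sum_(a : n.+1.-tuple V) Defs.pathP M x a * (take n a == b)%:R).
  by apply: eq_bigr => a _; rewrite -val_eqE /=; case: eqP; rewrite ?mulr1 ?mulr0.
rewrite (sum_pathP_take _ _ (fun s => (s == b)%:R)) (bigD1 b) //= eqxx mulr1.
by rewrite big1 ?addr0 // => q qb; rewrite val_eqE (negbTE qb) mulr0.
Qed.

Lemma prevail_cons m w s :
  prevail M m (w :: s) = prevail M (Num.min m (grade M w)) s.
Proof.
rewrite /prevail big_cons; elim: s => [|u s IHs]; first by rewrite !big_nil minC.
by rewrite !big_cons -IHs minCA.
Qed.

Lemma prevail_take m s k : prevail M m s <= prevail M m (take k s).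
Proof.
elim: s k m => [|u s IHs] [|k] m //=; last by rewrite !prevail_cons.
by rewrite {2}/prevail big_nil bigmin_le_id.
Qed.

Lemma prevail_id m s : {in s, forall w, m <= grade M w} -> prevail M m s = m.
Proof.
by move=> s_ge; rewrite /prevail big_seq_cond; apply: bigmin_eq_id => w /andP[/s_ge].
Qed.

Lemma pval_le_norm tau sg v :
  pval M tau sg v <= \sum_t `|ms_value M t| + `|tau|.
Proof.
have value_le t : ms_value M t <= \sum_t `|ms_value M t|.
  apply: le_trans (ler_norm _) _.
  by rewrite (bigD1 t) //= lerDl sumr_ge0.
elim: sg v => [|k IHk] v /=; first by rewrite addr_ge0 ?sumr_ge0.
case: ifP => [_ | /negbT vT].
  by apply: lerD; rewrite ?value_le // -normrN ler_norm.
rewrite -[X in _ <= X]add0r; apply: lerD; first by rewrite oppr_le0 ms_price_ge0.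
exact: ler_sum_P_const.
Qed.

Lemma has_sup_pval tau v :
  has_sup [set pval M tau sg v | sg in [set: pstrat V]]%classic.
Proof.
split; first by exists 0, (@PHalt V).
by exists (\sum_t `|ms_value M t| + `|tau|) => _ [sg _ <-]; exact: pval_le_norm.
Qed.

Lemma pval_le_Uopt tau sg v : pval M tau sg v <= Uopt M tau v.
Proof. by apply: (sup_upper_bound (has_sup_pval tau v)); exists sg. Qed.

Lemma Uopt_ge0 tau v : 0 <= Uopt M tau v.
Proof. exact: pval_le_Uopt tau (@PHalt V) v. Qed.

Lemma Uopt_dest tau t : t \in ms_dest M -> ms_value M t - tau <= Uopt M tau t.
Proof.
by move=> tT; have := pval_le_Uopt tau (@PPlay V (fun=> @PHalt V)) t; rewrite /= tT.
Qed.

Lemma Uopt_step tau u : u \notin ms_dest M ->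
  - ms_price M u + \sum_w P u w * Uopt M tau w <= Uopt M tau u.
Proof.
move=> uT; apply/ler_addgt0Pr => e e0.
have near_sup w : exists sg, Uopt M tau w - e < pval M tau sg w.
  have [_ [sg _ <-] lt_sg] := sup_adherent e0 (has_sup_pval tau w).
  by exists sg.
have [k Hk] := choice near_sup.
have := pval_le_Uopt tau (@PPlay V k) u; rewrite /= (negbTE uT).
have : \sum_w P u w * Uopt M tau w <= \sum_w P u w * pval M tau (k w) w + e.
  by apply: ler_sum_P => w _; have := Hk w; lra.
lra.
Qed.

Lemma pval_shift tau d sg v :
  0 <= d -> pval M tau sg v <= pval M (tau + d) sg v + d.
Proof.
move=> d0; elim: sg v => [|k IHk] v /=; first by rewrite add0r.
case: ifP => _; first lra.
by rewrite -addrA lerD2l; apply: ler_sum_P => w _.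
Qed.

Lemma Uopt_le0 tau v : (forall t, t \in ms_dest M -> ms_value M t <= tau) ->
  Uopt M tau v <= 0.
Proof.
move=> value_le; apply: ge_sup; first by exists 0, (@PHalt V).
move=> _ [sg _ <-]; elim: sg v => [|k IHk] v //=.
case: ifP => [vT | /negbT vT]; first by rewrite subr_le0 value_le.
by rewrite -[X in _ <= X]addr0 lerD ?oppr_le0 ?ms_price_ge0 ?ler_sum_P_const.
Qed.

Lemma Uopt_gt_grade tau v : grade M v < tau -> Uopt M tau v <= 0.
Proof.
set B := \sum_t `|ms_value M t|.
have Uopt_gtB tau' : B < tau' -> Uopt M tau' v <= 0.
  move=> Btau; apply: Uopt_le0 => t _; rewrite (le_trans (ler_norm _)) // ltW //.
  by apply: le_lt_trans Btau; rewrite /B (bigD1 t) //= lerDl sumr_ge0.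
move=> gtau; rewrite leNgt; apply/negP => Upos.
have hs : has_sup [set tau' | 0 < Uopt M tau' v]%classic.
  split; first by exists tau.
  by exists B => tau' /=; apply: contraPP => /negP; rewrite -ltNge => /Uopt_gtB; lra.
by have := sup_upper_bound hs Upos; rewrite -/(grade M v); lra.
Qed.

Lemma Uopt_grade v : Uopt M (grade M v) v <= 0.
Proof.
apply: ge_sup; first by exists 0, (@PHalt V).
move=> _ [sg _ <-]; apply/ler_addgt0Pr => e e0; rewrite add0r.
have := pval_shift (grade M v) e sg v (ltW e0).
have := pval_le_Uopt (grade M v + e) sg v.
have := Uopt_gt_grade (grade M v + e) v; rewrite ltrDl e0 => /(_ isT).
lra.
Qed.

Lemma Uopt_step_capped m u : u \notin ms_dest M ->
  - ms_price M u + \sum_w P u w * Uopt M (Num.min m (grade M w)) w <= Uopt M m u.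
Proof.
(* If grade w < m, both U^w(grade w) <= 0 <= U^w(m). *)
move=> uT; apply: le_trans _ (Uopt_step m _ uT); rewrite lerD2l.
apply: ler_sum => w _; rewrite ler_wpM2l ?ms_P_ge0 //.
have [//|gm] := leP m (grade M w).
exact: le_trans (Uopt_grade w) (Uopt_ge0 _ _).
Qed.

Lemma sum_pathP_prevail_step n x m (l : R -> R) : {homo l : a b / a <= b} ->
  \sum_w P x w *
    \sum_(q : n.-tuple V) Defs.pathP M w q * l (prevail M (Num.min m (grade M w)) q)
  <= \sum_(q : n.-tuple V) Defs.pathP M x q * l (prevail M m q).
Proof.
move=> l_homo; rewrite -(sum_pathP_take _ _ (fun q => l (prevail M m q))).
under eq_bigr do under eq_bigr do rewrite -prevail_cons.
rewrite -(sum_pathP_cons _ _ (fun q => l (prevail M m q))).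
by apply: ler_sum => q _; rewrite ler_wpM2l ?pathP_ge0 // l_homo // prevail_take.
Qed.

End MarkovSystemFacts.

Section MaxF.
Context {R : realType} {J : finType} {F : {set {set J}}} {h : {set J} -> R}.

Lemma semiadd_set0 y : semiadd h finset.set0 y = h finset.set0.
Proof. by rewrite /semiadd big_set0 add0r. Qed.

Lemma semiadd_le_maxF A y : A \in F -> semiadd h A y <= maxF F h y.
Proof. exact: le_bigmax_cond. Qed.

Lemma h0_le_maxF y : h finset.set0 <= maxF F h y.
Proof. by rewrite -(semiadd_set0 y); exact: bigmax_ge_id. Qed.

Lemma ler_maxF y y' : (forall i, y i <= y' i) -> maxF F h y <= maxF F h y'.
Proof.
move=> yy'; rewrite /maxF !semiadd_set0; apply: le_bigmax2 => A _.
by rewrite lerD2r ler_sum.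
Qed.

End MaxF.

Section ExpectedPrevailing.
Context {R : realType} {J : finType} (S : J -> MarkovSystem R).
Context (F : {set {set J}}) (h : {set J} -> R).
Hypothesis HS : forall i, markov_system (S i).

Definition exp_capped n (x : jstate S) (m : J -> R) : R :=
  \sum_(p : {dffun forall i, n.-tuple (ms_state (S i))})
    (\prod_i Defs.pathP (S i) (x i) (p i)) *
    maxF F h (fun i => prevail (S i) (m i) (p i)).

Lemma exp_prevailing_nE n :
  exp_prevailing_n S F h n =
  exp_capped n (jstart S) (fun i => grade (S i) (ms_start (S i))).
Proof. by []. Qed.

Lemma le_exp_capped n x m c :
  (forall p : {dffun forall i, n.-tuple (ms_state (S i))},
     \prod_i Defs.pathP (S i) (x i) (p i) != 0 ->
     c <= maxF F h (fun i => prevail (S i) (m i) (p i))) ->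
  c <= exp_capped n x m.
Proof.
move=> c_le.
have weights1 : \sum_(p : {dffun forall i, n.-tuple (ms_state (S i))})
    \prod_i Defs.pathP (S i) (x i) (p i) = 1.
  rewrite (sum_dffun_prod _ (fun i (q : n.-tuple _) => Defs.pathP (S i) (x i) q)).
  by rewrite big1 // => i _; exact: sum_pathP.
rewrite -[c]mul1r -weights1 mulr_suml; apply: ler_sum => p _.
have [->|p_nz] := eqVneq (\prod_i Defs.pathP (S i) (x i) (p i)) 0.
  by rewrite !mul0r.
by rewrite ler_wpM2l ?c_le ?prodr_ge0 // => i _; exact: pathP_ge0.
Qed.

Lemma h0_le_exp_capped n x m : h finset.set0 <= exp_capped n x m.
Proof. by apply: le_exp_capped => p _; exact: h0_le_maxF. Qed.

Lemma semiadd_le_exp_capped n x m A : A \in F ->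
  (forall i, i \in A -> x i \in ms_dest (S i)) ->
  (forall i, m i <= grade (S i) (x i)) ->
  semiadd h A m <= exp_capped n x m.
Proof.
move=> AF A_dest m_le; apply: le_exp_capped => p p_nz.
apply: le_trans _ (semiadd_le_maxF _ _ AF); rewrite lerD2r; apply: ler_sum => i iA.
have pi_nz : Defs.pathP (S i) (x i) (p i) != 0.
  by apply: contraNneq p_nz => pi0; rewrite (bigD1 i) //= pi0 mul0r.
rewrite prevail_id // => w /(pathP_dest (HS i) _ _ (A_dest i iA) pi_nz) ->.
exact: m_le.
Qed.

Lemma exp_capped_succ_le n x m : exp_capped n.+1 x m <= exp_capped n x m.
Proof.
pose trunc (p : {dffun forall i, n.+1.-tuple (ms_state (S i))}) :
  {dffun forall i, n.-tuple (ms_state (S i))} := finfun (fun i => trunc_tuple (p i)).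
have trunc_le : exp_capped n.+1 x m <=
    \sum_(p : {dffun forall i, n.+1.-tuple (ms_state (S i))})
      (\prod_i Defs.pathP (S i) (x i) (p i)) *
      maxF F h (fun i => prevail (S i) (m i) (trunc p i)).
  apply: ler_sum => p _; apply: ler_wpM2l.
    by apply: prodr_ge0 => i _; exact: pathP_ge0.
  by apply: ler_maxF => i; rewrite ffunE prevail_take.
apply: (le_trans trunc_le).
rewrite (sum_dffun_prod_comp _ _ (fun i => @trunc_tuple _ n)
  (fun i => Defs.pathP (S i) (x i))
  (fun p => maxF F h (fun i => prevail (S i) (m i) (p i)))).
by under eq_bigr => p _ do
  under eq_bigr => i _ do rewrite (sum_pathP_trunc (HS i)).
Qed.

Local Notation jstate_with x i w := (@eqtype.dfwith J (fun j => ms_state (S j)) x i w).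
Local Notation caps_with m i a := (@eqtype.dfwith J (fun=> R) m i a).

Lemma exp_capped_at {n i} (q0 : n.-tuple (ms_state (S i))) x y m m' :
  (forall j, i != j -> y j = x j) -> (forall j, i != j -> m' j = m j) ->
  exp_capped n y m' =
  \sum_(p : {dffun forall j, n.-tuple (ms_state (S j))} | p i == q0)
    (\prod_(j | j != i) Defs.pathP (S j) (x j) (p j)) *
    \sum_(q : n.-tuple (ms_state (S i))) Defs.pathP (S i) (y i) q *
      maxF F h (caps_with (fun j => prevail (S j) (m j) (p j)) i
                          (prevail (S i) (m' i) q)).
Proof.
move=> yx m'm; rewrite /exp_capped (sum_dffun_at i q0); apply: eq_bigr => p _.
rewrite mulr_sumr; apply: eq_bigr => q _; rewrite (bigD1 i) //= dffun_with_in.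
rewrite mulrCA -mulrA; congr (_ * (_ * _)).
  by apply: eq_bigr => j ji; rewrite yx 1?eq_sym // dffun_with_out // eq_sym.
congr (maxF F h _); apply: funext => j; have [<-|ij] := eqVneq i j.
  by rewrite dffun_with_in dfwith_in.
by rewrite dffun_with_out // dfwith_out // m'm.
Qed.

Lemma exp_capped_step n (x : jstate S) (m : J -> R) i :
  \sum_w ms_P (S i) (x i) w *
    exp_capped n (jstate_with x i w) (caps_with m i (Num.min (m i) (grade (S i) w)))
  <= exp_capped n x m.
Proof.
pose q0 := nseq_tuple n (x i).
pose C (p : {dffun forall j, n.-tuple (ms_state (S j))}) :=
  \prod_(j | j != i) Defs.pathP (S j) (x j) (p j).
pose l (p : {dffun forall j, n.-tuple (ms_state (S j))}) z :=
  maxF F h (caps_with (fun j => prevail (S j) (m j) (p j)) i z).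
have l_homo p : {homo l p : a b / a <= b}.
  move=> a b ab; apply: ler_maxF => j.
  by have [<-|ij] := eqVneq i j; rewrite ?dfwith_in ?dfwith_out.
have exp_w w : exp_capped n (jstate_with x i w)
    (caps_with m i (Num.min (m i) (grade (S i) w))) =
  \sum_(p : {dffun forall j, n.-tuple (ms_state (S j))} | p i == q0) C p *
    \sum_(q : n.-tuple (ms_state (S i)))
      Defs.pathP (S i) w q * l p (prevail (S i) (Num.min (m i) (grade (S i) w)) q).
  by rewrite (exp_capped_at q0 x _ m) ?dfwith_in // => j ij; rewrite dfwith_out.
rewrite (exp_capped_at q0 x x m m) //.
under eq_bigr do rewrite exp_w mulr_sumr.
rewrite exchange_big /=; apply: ler_sum => p _.
under eq_bigr do rewrite mulrCA.
rewrite -mulr_sumr ler_wpM2l ?sum_pathP_prevail_step //.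
by apply: prodr_ge0 => j _; exact: pathP_ge0.
Qed.

Lemma sutil_stop_le n x m A : A \in F ->
  (forall i, i \in A -> x i \in ms_dest (S i)) ->
  (forall i, m i <= grade (S i) (x i)) ->
  sutil S h (SStop _ _ A) x <= exp_capped n x m + \sum_i Uopt (S i) (m i) (x i).
Proof.
move=> AF A_dest m_le /=; have := semiadd_le_exp_capped n x m A AF A_dest m_le.
have values_le : \sum_(i in A) ms_value (S i) (x i) <=
    \sum_(i in A) m i + \sum_i Uopt (S i) (m i) (x i).
  apply: le_trans (_ : _ <= \sum_(i in A) (m i + Uopt (S i) (m i) (x i))) _.
    by apply: ler_sum => i iA; have := Uopt_dest (HS i) (m i) _ (A_dest i iA); lra.
  rewrite big_split lerD2l [X in _ <= X](bigID (mem A)) /= lerDl.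
  by apply: sumr_ge0 => i _; exact: Uopt_ge0.
rewrite /semiadd; lra.
Qed.

Lemma sutil_adv_le n (x : jstate S) (m : J -> R) i
    (k : ms_state (S i) -> strat J (fun j => ms_state (S j))) :
  x i \notin ms_dest (S i) ->
  (forall w, 0 < ms_P (S i) (x i) w ->
     sutil S h (k w) (jstate_with x i w) <=
     exp_capped n (jstate_with x i w) (caps_with m i (Num.min (m i) (grade (S i) w)))
     + \sum_j Uopt (S j) (caps_with m i (Num.min (m i) (grade (S i) w)) j)
                (jstate_with x i w j)) ->
  sutil S h (SAdv _ _ i k) x <= exp_capped n x m + \sum_j Uopt (S j) (m j) (x j).
Proof.
move=> xT k_le /=; set C := \sum_(j | j != i) Uopt (S j) (m j) (x j).
have slack_w w : \sum_j Uopt (S j) (caps_with m i (Num.min (m i) (grade (S i) w)) j)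
    (jstate_with x i w j) = Uopt (S i) (Num.min (m i) (grade (S i) w)) w + C.
  rewrite (bigD1 i) //= !dfwith_in; congr (_ + _); apply: eq_bigr => j ji.
  by rewrite !dfwith_out // eq_sym.
have children : \sum_w ms_P (S i) (x i) w * sutil S h (k w) (jstate_with x i w) <=
    \sum_w ms_P (S i) (x i) w *
      (exp_capped n (jstate_with x i w)
         (caps_with m i (Num.min (m i) (grade (S i) w)))
       + Uopt (S i) (Num.min (m i) (grade (S i) w)) w) + C.
  by apply: (ler_sum_P (HS i)) => w Pw; rewrite -addrA -slack_w k_le.
rewrite (eq_bigr _ (fun w _ => mulrDr _ _ _)) big_split /= in children.
have := exp_capped_step n x m i.
have := Uopt_step_capped (HS i) (m i) _ xT.
rewrite (bigD1 i) //= -/C; lra.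
Qed.

Lemma sutil_le_exp_capped n {sg x m} :
  svalid S F sg x -> (forall i, m i <= grade (S i) (x i)) ->
  sutil S h sg x <= exp_capped n x m + \sum_i Uopt (S i) (m i) (x i).
Proof.
elim: sg x m => [A | i k IHk] x m [valid_now valid_next] m_le.
  exact: sutil_stop_le.
apply: sutil_adv_le => // w Pw; apply: IHk; first exact: valid_next.
move=> j; have [<-|ij] := eqVneq i j; last by rewrite !dfwith_out.
by rewrite !dfwith_in ge_min lexx orbT.
Qed.

End ExpectedPrevailing.

Theorem lemma1 (R : realType) (J : finType) (S : J -> MarkovSystem R)
    (F : {set {set J}}) (h : {set J} -> R) :
  (forall i, markov_system (S i)) ->
  (forall i t, t \in ms_dest (S i) -> 0 <= ms_value (S i) t) ->
  F != (finset.set0 : {set {set J}}) -> downward_closed F ->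
  forall sg : strat J (fun i => ms_state (S i)),
    svalid S F sg (jstart S) ->
    sutil S h sg (jstart S) <= exp_prevailing S F h.
Proof.
(* Nonnegative values and a nonempty, downward-closed F are not needed here. *)
move=> HS _ _ _ sg sg_valid.
have le_n n : sutil S h sg (jstart S) <= exp_prevailing_n S F h n.
  rewrite exp_prevailing_nE.
  apply: le_trans (sutil_le_exp_capped S F h HS n sg_valid (fun i => lexx _)) _.
  rewrite -[X in _ <= X]addr0 lerD2l sumr_le0 // => i _; exact: Uopt_grade.
have cvg_n : cvgn (exp_prevailing_n S F h).
  apply: nonincreasing_is_cvgn.
    by apply/nonincreasing_seqP => n; exact: exp_capped_succ_le.
  by exists (h finset.set0) => _ [n _ <-]; exact: h0_le_exp_capped.
by apply: limr_ge cvg_n _; exact: nearW.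
Qed.
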